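(* Let $\Delta^m$ be the last matrix produced by the Incremental Sweeping Algorithm applied to a connection matrix $\Delta\in\mathbb F^{m\times m}$. Then every entry of $\Delta^m$ at a primary pivot position is nonzero, and every nonzero entry of $\Delta^m$ either is at a primary pivot position or lies strictly above the unique primary pivot position of its column. In particular every column of $\Delta^m$ containing no primary pivot is zero.
   Context: Throughout, $\mathbb F$ is a field and $m\ge1$. $U^{pq}$ is the $m\times m$ matrix whose only nonzero entry is a $1$ in position $(p,q)$. Superscripts on matrices are indices, not powers. A connection matrix (over $\mathbb F$) is a matrix $\Delta\in\mathbb F^{m\times m}$ together with a partition $\{1,\dots,m\}=J_0\sqcup\cdots\sqcup J_b$ (the column/row partition; the $J_k$ need not consist of consecutive integers) such that $\Delta$ is upper triangular, $\Delta\Delta=0$, and $\Delta_{ij}=0$ unless $i<j$ and $(i,j)\in\bigcup_{k=1}^bJ_{k-1}\times J_k$. For $1\le r\le m-1$ the $r$-th diagonal is $\{(j-r,j):r<j\le m\}$. Incremental Sweeping Algorithm (ISA) applied to a connection matrix $\Delta$: set $\Delta^0=\Delta^1=\Delta$. For $r=1,\dots,m-1$ in turn: (Markup) for every position $(j-r,j)$ on the $r$-th diagonal with $\Delta^r_{j-r,j}\ne0$ such that no position in column $j$ was marked as a primary pivot at an earlier iteration: if some position $(j-r,p)$ of row $j-r$ was marked as a primary pivot at an earlier iteration, mark $(j-r,j)$ as a change-of-basis pivot of iteration $r$; otherwise mark $(j-r,j)$ permanently as a primary pivot (marked at iteration $r$). (Update) Let $T^r=I-\sum \frac{\Delta^r_{j-r,j}}{\Delta^r_{j-r,p}}U^{pj}$,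 the sum running over all change-of-basis pivots $(j-r,j)$ of iteration $r$, where $(j-r,p)$ is the primary pivot position in row $j-r$; set $\Delta^{r+1}=(T^r)^{-1}\Delta^rT^r$. The primary pivots of $\Delta^m$ are all positions marked as primary pivots at iterations $1,\dots,m-1$. *)

From HB Require Import structures.
From mathcomp Require Import all_boot all_order all_algebra.
Set Implicit Arguments. Unset Strict Implicit. Unset Printing Implicit Defensive.
Import GRing.Theory.
Local Open Scope ring_scope.

(* Indices are 0-based: 'I_m = {0,...,m-1}; position (i,j) in the paper is
   (i+1, j+1) here.  The partition J_0 ⊔ ... ⊔ J_b is encoded by the function
   deg : 'I_m -> nat with deg i = k iff i ∈ J_k, and bound b. *)

Definition is_connection_matrix (F : fieldType) (m b : nat)
    (deg : 'I_m -> nat) (D : 'M[F]_m) : Prop :=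
  [/\ forall i, (deg i <= b)%N,
      forall i j : 'I_m, (j < i)%N -> D i j = 0,
      D *m D = 0 &
      forall i j : 'I_m, D i j != 0 ->
        (i < j)%N /\ (1 <= deg j <= b)%N /\ deg i = (deg j).-1 ].

(* State of the ISA: current matrix Δ^r and the set of positions marked as
   primary pivots so far. *)
Section ISA.
Variables (F : fieldType) (m : nat).

Definition isa_cand (r : nat) (D : 'M[F]_m) (P : {set 'I_m * 'I_m})
    (i j : 'I_m) : bool :=
  [&& (nat_of_ord j == i + r)%N, D i j != 0 & [forall k, (k, j) \notin P]].

Definition has_row_piv (P : {set 'I_m * 'I_m}) (i : 'I_m) : bool :=
  [exists p, (i, p) \in P].

Definition row_piv (P : {set 'I_m * 'I_m}) (i : 'I_m) : 'I_m :=
  odflt i [pick p | (i, p) \in P].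

Definition cob_pivots r D P : {set 'I_m * 'I_m} :=
  [set x | isa_cand r D P x.1 x.2 && has_row_piv P x.1].

Definition new_primary r D P : {set 'I_m * 'I_m} :=
  [set x | isa_cand r D P x.1 x.2 && ~~ has_row_piv P x.1].

Definition isa_T r (D : 'M[F]_m) P : 'M[F]_m :=
  1%:M - \sum_(x in cob_pivots r D P)
           (D x.1 x.2 / D x.1 (row_piv P x.1)) *: delta_mx (row_piv P x.1) x.2.

Definition isa_step r (s : 'M[F]_m * {set 'I_m * 'I_m}) :
    'M[F]_m * {set 'I_m * 'I_m} :=
  let: (D, P) := s in
  let T := isa_T r D P in
  (invmx T *m D *m T, P :|: new_primary r D P).

(* isa D n = (Δ^{n+1}, primary pivots marked at iterations 1..n) *)
Fixpoint isa (D : 'M[F]_m) (n : nat) : 'M[F]_m * {set 'I_m * 'I_m} :=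
  match n with
  | 0 => (D, set0)
  | n'.+1 => isa_step n'.+1 (isa D n')
  end.

Definition isa_final (D : 'M[F]_m) : 'M[F]_m := (isa D m.-1).1.
Definition isa_primary (D : 'M[F]_m) : {set 'I_m * 'I_m} := (isa D m.-1).2.

End ISA.

From HB Require Import structures.
From mathcomp Require Import all_boot all_order all_algebra.
From mathcomp Require Import zify.
Set Implicit Arguments. Unset Strict Implicit.
Import GRing.Theory.
Local Open Scope ring_scope.

(* The ISA maintains a loop invariant: after n iterations every primary pivot
   lies on one of the diagonals 1..n, is nonzero and is the only primary pivot
   of its column, and every nonzero entry on the diagonals 1..n lies weakly
   above a primary pivot of its column.  At iteration r = n+1 the matrix T^r
   is 1 - N with N^2 = 0, so the step is D |-> (1 + N) D (1 - N): right
   multiplication by 1 - N clears each column carrying a change-of-basis pivot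
   from that pivot downwards, and left multiplication by 1 + N only adds lower
   rows to higher ones, so it cannot create nonzero entries below the lowest
   nonzero entry of a column.  After m - 1 iterations the invariant covers
   every entry. *)

Lemma invmx_1B_sqr0 (R : comUnitRingType) k (N : 'M[R]_k) :
  N *m N = 0 -> invmx (1%:M - N) = 1%:M + N.
Proof.
move=> NN0; have E : (1%:M - N) *m (1%:M + N) = 1%:M.
  by rewrite mulmxDr mulmx1 mulmxBl mul1mx NN0 subr0 addrAC addrK.
have [U _] := mulmx1_unit E.
by have := mulKmx U (1%:M + N); rewrite E mulmx1.
Qed.

Section Invariant.
Variables (F : fieldType) (m : nat).
Implicit Types (D : 'M[F]_m) (P : {set 'I_m * 'I_m}).

Record isa_invariant n D P : Prop := IsaInvariant {
  pivot_bounds i p :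
    (i, p) \in P -> [/\ (i < p)%N, (p <= i + n)%N & D i p != 0];
  pivot_col_uniq i i' p : (i, p) \in P -> (i', p) \in P -> i = i';
  pivot_cover (x y : 'I_m) : (y <= x + n)%N -> D x y != 0 ->
    exists2 k, (k, y) \in P & (x <= k)%N }.

Lemma row_pivP P i : has_row_piv P i -> (i, row_piv P i) \in P.
Proof.
rewrite /row_piv; case: pickP => [p Hp|H] //=.
by move/existsP => [p Hp]; rewrite H in Hp.
Qed.

Lemma isa_invariant0 D : (forall i j, D i j != 0 -> (i < j)%N) ->
  isa_invariant 0 D set0.
Proof.
move=> Dup; split=> [i p|i i' p|x y xy /Dup]; rewrite ?in_set0 //; lia.
Qed.

Section Step.
Variables (D : 'M[F]_m) (P : {set 'I_m * 'I_m}) (n : nat).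
Hypothesis inv : isa_invariant n D P.

Local Notation r := n.+1.
Local Notation C := (cob_pivots r D P).
Local Notation Nw := (new_primary r D P).
Local Notation rp := (row_piv P).

Lemma D_eq0_below (y z : 'I_m) :
  (y <= z + n)%N -> (forall k, (k, y) \in P -> (k < z)%N) -> D z y = 0.
Proof.
move=> yz below; apply/eqP; apply: contraT => /(pivot_cover inv yz) [k kP zk].
by have := below k kP; lia.
Qed.

Lemma cob_pivotP i j : (i, j) \in C ->
  [/\ nat_of_ord j = (i + r)%N, D i j != 0, forall k, (k, j) \notin P
    & (i, rp i) \in P].
Proof.
rewrite inE /= /isa_cand => /andP [/and3P [/eqP -> -> /forallP H] Hr].
by split => //; exact: row_pivP.
Qed.

Lemma new_primaryP i j : (i, j) \in Nw ->
  [/\ nat_of_ord j = (i + r)%N, D i j != 0, forall k, (k, j) \notin P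
    & ~~ has_row_piv P i].
Proof.
by rewrite inE /= /isa_cand => /andP [/and3P [/eqP -> -> /forallP H] Hr].
Qed.

Lemma cob_pivot_row i j : (i, j) \in C ->
  [/\ (i < rp i)%N, (rp i <= i + n)%N, D i (rp i) != 0 & (rp i < j)%N].
Proof.
case/cob_pivotP => Hj _ _ /(pivot_bounds inv) [h1 h2 h3]; split => //; lia.
Qed.

Lemma cob_pivot_col_uniq i i' j : (i, j) \in C -> (i', j) \in C -> i = i'.
Proof.
case/cob_pivotP => h1 _ _ _ /cob_pivotP [h2 _ _ _].
by apply: val_inj => /=; lia.
Qed.

Let c (x : 'I_m * 'I_m) := D x.1 x.2 / D x.1 (rp x.1).
Let N : 'M[F]_m := \sum_(x in C) c x *: delta_mx (rp x.1) x.2.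

Lemma N_entry a b :
  N a b = \sum_(x in C) c x * ((a == rp x.1) && (b == x.2))%:R.
Proof. by rewrite /N summxE; apply: eq_bigr => x _; rewrite !mxE. Qed.

Lemma N_entry_nz a b : N a b != 0 -> exists2 i, (i, b) \in C & a = rp i.
Proof.
rewrite N_entry => Nab.
case: (pickP [pred x | (x \in C) && ((a == rp x.1) && (b == x.2))]) => [x|none].
  by case/andP=> xC /andP [/eqP -> /eqP ->]; exists x.1; case: x xC.
rewrite big1 ?eqxx // in Nab => x xC; have := none x; rewrite /= xC /= => ->.
by rewrite mulr0.
Qed.

Lemma N_entry_cob i b : (i, b) \in C -> N (rp i) b = c (i, b).
Proof.
move=> iC; rewrite N_entry (bigD1 (i, b)) //= !eqxx mulr1 big1 ?addr0 //.
move=> [x1 x2] /andP [xC xne] /=.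
have [/andP [_ /eqP eb]|_] := boolP ((rp i == rp x1) && (b == x2));
  last by rewrite mulr0.
by subst x2; rewrite (cob_pivot_col_uniq iC xC) eqxx in xne.
Qed.

Lemma N_upper a b : N a b != 0 -> (a < b)%N.
Proof. by case/N_entry_nz => i /cob_pivot_row [] _ _ _ + ->. Qed.

(* Rows of N are pivot columns of P, columns of N are change-of-basis
   columns, and the latter carry no primary pivot. *)
Lemma N_sqr0 : N *m N = 0.
Proof.
apply/matrixP => a b; rewrite !mxE big1 // => z _.
have [->|Naz] := eqVneq (N a z) 0; first by rewrite mul0r.
have [->|Nzb] := eqVneq (N z b) 0; first by rewrite mulr0.
have [i /cob_pivotP [_ _ noP _] _] := N_entry_nz Naz.
have [i' /cob_pivotP [_ _ _ i'P] ez] := N_entry_nz Nzb.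
by have := noP i'; rewrite ez i'P.
Qed.

Let M := D *m (1%:M - N).
Let D' := (1%:M + N) *m M.

Lemma isa_step_mx : (isa_step r (D, P)).1 = D'.
Proof.
by rewrite /= [isa_T _ _ _]/= invmx_1B_sqr0 ?N_sqr0 // /D' /M mulmxA.
Qed.

Lemma M_nocob y : (forall i, (i, y) \notin C) -> forall z, M z y = D z y.
Proof.
move=> nocob z; rewrite /M mulmxBr mulmx1 !mxE big1 ?subr0 // => w _.
have [->|Nwy] := eqVneq (N w y) 0; first by rewrite mulr0.
by have [i iC _] := N_entry_nz Nwy; have := nocob i; rewrite iC.
Qed.

Lemma M_cob i y : (i, y) \in C -> forall z : 'I_m, (i <= z)%N -> M z y = 0.
Proof.
move=> iC; have [yE _ noP iP] := cob_pivotP iC.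
have [_ rpn Dirp _] := cob_pivot_row iC.
have ME z : M z y = D z y - c (i, y) * D z (rp i).
  rewrite /M mulmxBr mulmx1 !mxE (bigD1 (rp i)) //= N_entry_cob //.
  rewrite big1 ?addr0 ?(mulrC (c _)) // => w wne.
  have [->|Nwy] := eqVneq (N w y) 0; first by rewrite mulr0.
  have [i' i'C ew] := N_entry_nz Nwy.
  by rewrite ew (cob_pivot_col_uniq iC i'C) eqxx in wne.
move=> z; rewrite leq_eqVlt => /orP [/eqP/val_inj <- | iz].
  by rewrite ME /c /= divfK // subrr.
have Dzy : D z y = 0.
  by apply: D_eq0_below => [|k]; [lia | rewrite (negbTE (noP k))].
have Dzrp : D z (rp i) = 0.
  by apply: D_eq0_below => [|k /(pivot_col_uniq inv iP) <-]; lia.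
by rewrite ME Dzy Dzrp mulr0 subrr.
Qed.

Lemma D'_entry_low (x y : 'I_m) :
  (forall z : 'I_m, (x < z)%N -> M z y = 0) -> D' x y = M x y.
Proof.
move=> low; rewrite /D' mulmxDl mul1mx mxE [X in _ + X]mxE.
rewrite big1 ?addr0 // => z _.
have [->|Nxz] := eqVneq (N x z) 0; first by rewrite mul0r.
by rewrite low ?mulr0 // N_upper.
Qed.

Lemma D'_entry_nz (x y : 'I_m) :
  D' x y != 0 -> exists2 z : 'I_m, (x <= z)%N & M z y != 0.
Proof.
move=> D'xy.
case: (pickP [pred z : 'I_m | (x < z)%N && (M z y != 0)]) =>
  [z /andP [xz Mzy] | none].
  by exists z => //; apply: ltnW.
exists x => //; rewrite -D'_entry_low // => z xz.
by have := none z; rewrite /= xz /= => /negbFE/eqP.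
Qed.

Lemma pivot_col_nocob k y : (k, y) \in P :|: Nw -> forall i, (i, y) \notin C.
Proof.
move=> kPN i; apply/negP => iC; have [yE _ noP iP] := cob_pivotP iC.
case/setUP: kPN => [kP|/new_primaryP [yE' _ _ norow]].
  by have := noP k; rewrite kP.
have ki : k = i by apply: val_inj => /=; lia.
by subst k; case/negP: norow; apply/existsP; exists (rp i).
Qed.

Lemma pivot_lowest i p (z : 'I_m) :
  (i, p) \in P :|: Nw -> (i < z)%N -> D z p = 0.
Proof.
case/setUP => [iP|/new_primaryP [pE _ noP _]] iz; apply: D_eq0_below.
- by have [_ + _] := pivot_bounds inv iP; lia.
- by move=> k /(pivot_col_uniq inv iP) <-.
- lia.
- by move=> k; rewrite (negbTE (noP k)).
Qed.

Lemma step_pivots (i p : 'I_m) : (i, p) \in P :|: Nw ->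
  [/\ (i < p)%N, (p <= i + r)%N & D' i p != 0].
Proof.
move=> iPN; have nocob := pivot_col_nocob iPN.
have -> : D' i p = D i p.
  rewrite D'_entry_low ?(M_nocob nocob) // => z iz.
  by rewrite (M_nocob nocob) (pivot_lowest iPN).
case/setUP: iPN => [/(pivot_bounds inv) [] | /new_primaryP [pE Dip _ _]];
  split => //; lia.
Qed.

Lemma step_pivot_col_uniq i i' p :
  (i, p) \in P :|: Nw -> (i', p) \in P :|: Nw -> i = i'.
Proof.
case/setUP => [iP | /new_primaryP [pE _ noP _]]
  /setUP [i'P | /new_primaryP [pE' _ noP' _]].
- exact: (pivot_col_uniq inv iP i'P).
- by have := noP' i; rewrite iP.
- by have := noP i'; rewrite i'P.
- by apply: val_inj => /=; lia.
Qed.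

Lemma extend_pivot (z y : 'I_m) :
  (forall i, (i, y) \notin C) -> (y <= z + r)%N -> D z y != 0 ->
  exists2 k, (k, y) \in P :|: Nw & (z <= k)%N.
Proof.
move=> nocob yz Dzy.
have [yzn|zny] := leqP y (z + n).
  by have [k kP zk] := pivot_cover inv yzn Dzy; exists k; rewrite ?inE ?kP.
case: (boolP [exists k, (k, y) \in P]) => [/existsP [k kP] | /existsPn noP].
  by exists k; [rewrite inE kP | have [_ + _] := pivot_bounds inv kP; lia].
have cand : isa_cand r D P z y.
  rewrite /isa_cand Dzy /=; apply/andP.
  by split; [apply/eqP; lia | apply/forallP].
exists z => //; apply/setUP; right; rewrite inE /= cand /=.
by apply: contraNN (nocob z) => row; rewrite inE /= cand.
Qed.

Lemma step_cover (x y : 'I_m) : (y <= x + r)%N -> D' x y != 0 ->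
  exists2 k, (k, y) \in P :|: Nw & (x <= k)%N.
Proof.
move=> yx D'xy.
case: (boolP [exists i, (i, y) \in C]) => [/existsP [i iC] | /existsPn nocob].
  have [yE _ _ _] := cob_pivotP iC.
  move: D'xy; rewrite D'_entry_low ?(M_cob iC) ?eqxx //; first lia.
  by move=> z xz; apply: (M_cob iC); lia.
have [z xz] := D'_entry_nz D'xy; rewrite M_nocob // => Dzy.
have [|k kPN zk] := extend_pivot nocob _ Dzy; first lia.
by exists k => //; apply: leq_trans zk.
Qed.

Lemma isa_step_invariant :
  isa_invariant r (isa_step r (D, P)).1 (isa_step r (D, P)).2.
Proof.
by rewrite isa_step_mx; split; [exact: step_pivots|exact: step_pivot_col_uniq|
  exact: step_cover].
Qed.

End Step.

Lemma isa_invariant_iter D : (forall i j, D i j != 0 -> (i < j)%N) ->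
  forall n, isa_invariant n (isa D n).1 (isa D n).2.
Proof.
move=> Dup; elim=> [|n IH]; first exact: isa_invariant0.
by move: IH => /=; case: (isa D n) => D0 P0; exact: isa_step_invariant.
Qed.

End Invariant.

Theorem mainTheorem3 (F : fieldType) (m b : nat) (deg : 'I_m -> nat)
    (D : 'M[F]_m) :
  (0 < m)%N ->
  is_connection_matrix b deg D ->
  let Dm := isa_final D in
  let P := isa_primary D in
  [/\ (forall i j, (i, j) \in P -> Dm i j != 0),
      (forall i j, Dm i j != 0 ->
         (i, j) \in P \/
         exists k, [/\ (k, j) \in P, (i < k)%N &
                       forall k', (k', j) \in P -> k' = k]) &
      (forall j, (forall k, (k, j) \notin P) -> forall i, Dm i j = 0)].
Proof.
move=> _ [_ _ _ Dsupp] Dm P.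
have Dup (i j : 'I_m) : D i j != 0 -> (i < j)%N by case/Dsupp.
have [pivots col_uniq cover] := isa_invariant_iter Dup m.-1.
have all_diag (i j : 'I_m) : (j <= i + m.-1)%N by have := ltn_ord j; lia.
split=> [i j /pivots [] // | i j /(cover _ _ (all_diag i j)) [k kP ik] |].
- have [ki|ne] := eqVneq k i; first by left; rewrite -ki.
  right; exists k; split=> // [|k' /col_uniq]; last exact.
  by rewrite ltn_neqAle ik andbT; apply: contraNneq ne => /val_inj ->.
- move=> j noP i; apply/eqP; apply: contraT.
  move=> /(cover _ _ (all_diag i j)) [k kP _].
  by have := noP k; rewrite kP.
Qed.
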